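(* Let $\mathbf L\in\mathbb R_+^{n\times k}$ and $\mathbf p\in\operatorname{relint}(\Delta_n)$. Then for any $t_1,t_2\in\operatorname{argmin}_{t'\in[k]}\mathbf p^\top\boldsymbol\ell_{t'}$ (i.e. $\mathbf p\in\mathcal Q^{\mathbf L}_{t_1}\cap\mathcal Q^{\mathbf L}_{t_2}$), we have $\mu_{\mathcal Q^{\mathbf L}_{t_1}}(\mathbf p)=\mu_{\mathcal Q^{\mathbf L}_{t_2}}(\mathbf p)$.
   Context: Notation: $[m]=\{1,\dots,m\}$; $\Delta_n=\{\mathbf p\in\mathbb R_+^n:\sum_i p_i=1\}$, whose relative interior is the set of $\mathbf p\in\Delta_n$ with all entries strictly positive. A loss matrix $\mathbf L\in\mathbb R_+^{n\times k}$ has columns $\boldsymbol\ell_t$. Trigger probability set: $\mathcal Q^{\mathbf L}_t=\{\mathbf p\in\Delta_n: t\in\operatorname{argmin}_{t'\in[k]}\mathbf p^\top\boldsymbol\ell_{t'}\}$. For a convex set $\mathcal Q\subseteq\mathbb R^n$ and $\mathbf p\in\mathcal Q$, $\mathcal F_{\mathcal Q}(\mathbf p)=\{\mathbf v:\exists\epsilon_0>0,\ \mathbf p+\epsilon\mathbf v\in\mathcal Q\ \forall\epsilon\in(0,\epsilon_0)\}$ and $\mu_{\mathcal Q}(\mathbf p)=\dim(\mathcal F_{\mathcal Q}(\mathbf p)\cap(-\mathcal F_{\mathcal Q}(\mathbf p)))$. *)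

(* The paper works over the reals; we state it over an
   arbitrary real field R (a generalization, purely algebraic statement). *)
From HB Require Import structures.
From mathcomp Require Import all_boot all_order all_algebra.
From Stdlib Require Import ClassicalDescription.
Set Implicit Arguments. Unset Strict Implicit. Unset Printing Implicit Defensive.
Import Order.TTheory GRing.Theory Num.Theory.
Local Open Scope ring_scope.

Definition pbool (P : Prop) : bool :=
  if excluded_middle_informative P then true else false.

Section Defs.
Variable R : realFieldType.

Definition simplex n (p : 'rV[R]_n) : Prop :=
  (forall i, 0 <= p 0 i) /\ \sum_(i < n) p 0 i = 1.

Definition relint_simplex n (p : 'rV[R]_n) : Prop :=
  (forall i, 0 < p 0 i) /\ \sum_(i < n) p 0 i = 1.

(* p^T l_t, where l_t is column t of L *)
Definition ploss n k (L : 'M[R]_(n, k)) (p : 'rV[R]_n) (t : 'I_k) : R :=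
  \sum_(i < n) p 0 i * L i t.

Definition is_argmin n k (L : 'M[R]_(n, k)) (p : 'rV[R]_n) (t : 'I_k) : Prop :=
  forall t' : 'I_k, ploss L p t <= ploss L p t'.

Definition trigger n k (L : 'M[R]_(n, k)) (t : 'I_k) (p : 'rV[R]_n) : Prop :=
  simplex p /\ is_argmin L p t.

Definition feasible_dirs n (Q : 'rV[R]_n -> Prop) (p : 'rV[R]_n)
    (v : 'rV[R]_n) : Prop :=
  exists e0 : R, 0 < e0 /\ forall e : R, 0 < e -> e < e0 -> Q (p + e *: v).

Definition lineality n (Q : 'rV[R]_n -> Prop) (p : 'rV[R]_n)
    (v : 'rV[R]_n) : Prop :=
  feasible_dirs Q p v /\ feasible_dirs Q p (- v).

Definition has_indep n (S : 'rV[R]_n -> Prop) (d : nat) : Prop :=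
  exists M : 'M[R]_(d, n), row_free M /\ forall i, S (row i M).

(* dimension (of the linear span) of S: the largest number of linearly
   independent vectors in S (this number is at most n) *)
Definition dimset n (S : 'rV[R]_n -> Prop) : nat :=
  (\max_(d < n.+1 | pbool (has_indep S d)) d)%N.

Definition mu n (Q : 'rV[R]_n -> Prop) (p : 'rV[R]_n) : nat :=
  dimset (lineality Q p).

End Defs.

(* Along a two-sided feasible direction v of Q_t1 at p, the point p + e v stays
   in Q_t1 for small e of either sign; since t1 and t2 tie at p, this forces
   v^T l_t1 = v^T l_t2.  Then t1 and t2 tie along the whole segment, so Q_t1
   and Q_t2 have the same lineality space at p, hence the same dimension. *)
From mathcomp Require Import all_boot all_order all_algebra.
From Stdlib Require Import ClassicalDescription.
Set Implicit Arguments. Unset Strict Implicit. Unset Printing Implicit Defensive.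
Import Order.TTheory GRing.Theory Num.Theory.
Local Open Scope ring_scope.

Section Trigger.
Variables (R : realFieldType) (n k : nat) (L : 'M[R]_(n, k)).

Lemma plossD (p q : 'rV[R]_n) t : ploss L (p + q) t = ploss L p t + ploss L q t.
Proof. by rewrite /ploss -big_split; apply: eq_bigr => i _; rewrite mxE mulrDl. Qed.

Lemma plossZ e (p : 'rV[R]_n) t : ploss L (e *: p) t = e * ploss L p t.
Proof. by rewrite /ploss mulr_sumr; apply: eq_bigr => i _; rewrite mxE mulrA. Qed.

Lemma plossN (p : 'rV[R]_n) t : ploss L (- p) t = - ploss L p t.
Proof. by rewrite -scaleN1r plossZ mulN1r. Qed.

Lemma is_argmin_tie p t1 t2 :
  is_argmin L p t1 -> is_argmin L p t2 -> ploss L p t1 = ploss L p t2.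
Proof. by move=> h1 h2; apply/le_anti; rewrite h1 h2. Qed.

Lemma feasible_dirs_trigger_le p v t1 t2 :
  ploss L p t1 = ploss L p t2 ->
  feasible_dirs (trigger L t1) p v -> ploss L v t1 <= ploss L v t2.
Proof.
move=> tie [e0 [e0_gt0 feas]].
have e_gt0 : 0 < e0 / 2%:R by rewrite divr_gt0.
have e_lt : e0 / 2%:R < e0 by rewrite ltr_pdivrMr // ltr_pMr // ltr1n.
have [_ /(_ t2)] := feas _ e_gt0 e_lt.
by rewrite !plossD !plossZ tie lerD2l ler_pM2l.
Qed.

Lemma lineality_trigger_tie p v t1 t2 :
  ploss L p t1 = ploss L p t2 ->
  lineality (trigger L t1) p v -> ploss L v t1 = ploss L v t2.
Proof.
move=> tie [/(feasible_dirs_trigger_le tie) le12 /(feasible_dirs_trigger_le tie)].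
by rewrite !plossN lerN2 => le21; apply/le_anti; rewrite le12 le21.
Qed.

Lemma feasible_dirs_trigger_transfer p v t1 t2 :
  ploss L p t1 = ploss L p t2 -> ploss L v t1 = ploss L v t2 ->
  feasible_dirs (trigger L t1) p v -> feasible_dirs (trigger L t2) p v.
Proof.
move=> tie_p tie_v [e0 [e0_gt0 feas]]; exists e0; split=> // e e_gt0 e_lt.
have [simplex_pv argmin_pv] := feas e e_gt0 e_lt; split=> [// | t].
by rewrite plossD plossZ -tie_p -tie_v -plossZ -plossD.
Qed.

Lemma lineality_trigger_transfer p v t1 t2 :
  ploss L p t1 = ploss L p t2 ->
  lineality (trigger L t1) p v -> lineality (trigger L t2) p v.
Proof.
move=> tie lin1; have tie_v := lineality_trigger_tie tie lin1.
have tie_nv : ploss L (- v) t1 = ploss L (- v) t2 by rewrite !plossN tie_v.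
case: lin1 => feas_v feas_nv.
by split; [exact: feasible_dirs_trigger_transfer tie_v feas_v |
  exact: feasible_dirs_trigger_transfer tie_nv feas_nv].
Qed.

End Trigger.

Lemma pbool_iff (P Q : Prop) : (P <-> Q) -> pbool P = pbool Q.
Proof.
rewrite /pbool => PQ; do 2 case: excluded_middle_informative => //.
- by move=> notQ p; case: notQ; apply/PQ.
- by move=> q notP; case: notP; apply/PQ.
Qed.

Lemma eq_dimset (R : realFieldType) n (S1 S2 : 'rV[R]_n -> Prop) :
  (forall v, S1 v <-> S2 v) -> dimset S1 = dimset S2.
Proof.
move=> S12; apply: eq_bigl => d; apply: pbool_iff.
by split=> -[M [free inS]]; exists M; split=> // i; apply/S12.
Qed.

Theorem mainTheorem12 (R : realFieldType) (n k : nat) (L : 'M[R]_(n, k))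
    (p : 'rV[R]_n) (t1 t2 : 'I_k) :
  (forall i j, 0 <= L i j) ->
  relint_simplex p ->
  is_argmin L p t1 -> is_argmin L p t2 ->
  mu (trigger L t1) p = mu (trigger L t2) p.
Proof.
move=> _ _ h1 h2; have tie := is_argmin_tie h1 h2.
apply: eq_dimset => v.
by split; apply: lineality_trigger_transfer; rewrite tie.
Qed.
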